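(* Let $a,b$ be positive integers, $h(j)=aj^2+b$ for $j\ge0$, $h(j)=0$ for $j<0$, and $\alpha=a/b$. Then $$\operatorname{hdepth}(h)=\begin{cases}\lfloor\alpha\rfloor+1,&\alpha\in(0,7),\\ 8,&\alpha\in[7,\tfrac{22}{3}],\\ 7,&\alpha\in(\tfrac{22}{3},8],\\ 6,&\alpha\in(8,11],\\ 5,&\alpha\in(11,\infty).\end{cases}$$
   Context: For a nonzero function $h:\mathbb Z\to\mathbb Z_{\ge 0}$ with $h(j)=0$ for all sufficiently negative $j$, and integers $k\le d$, set $\beta_k^d(h)=\sum_{j\le k}(-1)^{k-j}\binom{d-j}{k-j}h(j)$, and $\operatorname{hdepth}(h)=\max\{d\in\mathbb Z:\ \beta_k^d(h)\ge 0\text{ for all integers }k\le d\}$. *)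

From mathcomp Require Import all_boot all_order all_algebra.
Set Implicit Arguments. Unset Strict Implicit. Unset Printing Implicit Defensive.
Import Order.TTheory GRing.Theory Num.Theory.
Local Open Scope ring_scope.

(* beta_k^d(h) = sum_{j <= k} (-1)^(k-j) C(d-j, k-j) h(j), for a function
   h : int -> nat vanishing below the integer L (h j = 0 for j < L).
   The sum ranges over L <= j <= k, i.e. j = L + i with i = 0 .. k - L. *)
Definition beta (h : int -> nat) (L d k : int) : int :=
  \sum_(i < (absz (k - L)).+1 | (L + i%:Z <= k)%R)
     (-1) ^+ (absz (k - (L + i%:Z))%R) *
     ('C(absz (d - (L + i%:Z))%R, absz (k - (L + i%:Z))%R))%:Z * (h (L + i%:Z))%:Z.

Definition hdepth_ok (h : int -> nat) (L d : int) : Prop :=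
  forall k : int, k <= d -> 0 <= beta h L d k.

Definition is_hdepth (h : int -> nat) (L d : int) : Prop :=
  hdepth_ok h L d /\ forall d' : int, hdepth_ok h L d' -> d' <= d.

Definition hquad (a b : nat) (j : int) : nat :=
  if 0 <= j then (a * absz j ^ 2 + b)%N else 0%N.

(* For a sequence f indexed by naturals, the numbers
   beta_k^d = sum_(j <= k) (-1)^(k-j) C(d-j, k-j) f(j) satisfy the Pascal-type
   recurrence beta_(k+1)^(d+1) = beta_(k+1)^d - beta_k^d.  Hence if all
   beta_k^(d+1) are nonnegative, so are all beta_k^d: admissible depths form a
   down-set, and d is the Hilbert depth as soon as d is admissible and a single
   beta_k^(d+1) is negative.  The sum [beta] (indexed by j >= L) coincides
   with this natural-number version because h vanishes on negative integers.

   For h = a j^2 + b, every beta_k^d is a*A(d,k) + b*B(d,k) with integer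
   coefficients.  A finite table computation shows that for d <= 8 the two
   conditions beta_1^d >= 0 and beta_2^d >= 0 already imply admissibility,
   while beta_1^(d+1) = a - d b and
   beta_2^(d+1) = 4a + b - d(a + b) + C(d+1, 2) b change sign exactly at the
   thresholds of the theorem. *)

From mathcomp Require Import all_boot all_order all_algebra.
From mathcomp Require Import zify ring.
Set Implicit Arguments. Unset Strict Implicit. Unset Printing Implicit Defensive.
Import Order.TTheory GRing.Theory Num.Theory.
Local Open Scope ring_scope.

Definition betaN (f : nat -> int) (d k : nat) : int :=
  \sum_(0 <= j < k.+1) (-1) ^+ (k - j)%N * ('C(d - j, k - j))%:Z * f j.

Definition admissibleN (f : nat -> int) (d : nat) : Prop :=
  forall k, (k <= d)%N -> 0 <= betaN f d k.

Section Pascal.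
Variable f : nat -> int.

(* Pascal recurrence, from C(n+1, m+1) = C(n, m+1) + C(n, m). *)
Lemma betaN_pascal d k : (k <= d)%N ->
  betaN f d.+1 k.+1 = betaN f d k.+1 - betaN f d k.
Proof.
move=> le_kd; rewrite /betaN (big_nat_recr k.+1) //.
rewrite (big_nat_recr k.+1 _ _ (leq0n _)) /= !subnn !bin0 !expr0 addrAC -sumrB.
congr (_ + _); apply: eq_big_nat => j /andP[_ lt_jk].
have -> : (k.+1 - j = (k - j).+1)%N by lia.
have -> : (d.+1 - j = (d - j).+1)%N by lia.
rewrite binS exprS PoszD; ring.
Qed.

Lemma admissibleN_pred d : admissibleN f d.+1 -> admissibleN f d.
Proof.
move=> adm; elim=> [|k IHk] le_kd.
  by have := adm 0%N isT; rewrite /betaN !big_nat1 !subnn !bin0.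
have -> : betaN f d k.+1 = betaN f d.+1 k.+1 + betaN f d k.
  by rewrite betaN_pascal ?subrK // ltnW.
by rewrite addr_ge0 // ?adm ?IHk // ltnW.
Qed.

Lemma admissibleN_le d d' : (d <= d')%N -> admissibleN f d' -> admissibleN f d.
Proof.
move/subnK <-; elim: (d' - d)%N => [//|m IHm] adm.
by apply: IHm; apply: admissibleN_pred.
Qed.

End Pascal.

Lemma betaN_lin (f g : nat -> int) (x y : int) d k :
  betaN (fun j => x * f j + y * g j) d k = x * betaN f d k + y * betaN g d k.
Proof.
by rewrite /betaN !mulr_sumr -big_split; apply: eq_bigr => j _ /=; ring.
Qed.

Lemma betaN_1 f d : betaN f d 1 = f 1%N - d%:Z * f 0%N.
Proof. by rewrite /betaN !big_nat_recr //= big_nil !subn0 subnn bin0 bin1; ring. Qed.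

Lemma betaN_2 f d :
  betaN f d 2 = f 2%N - d.-1%:Z * f 1%N + 'C(d, 2)%:Z * f 0%N.
Proof.
by rewrite /betaN !big_nat_recr //= big_nil !subn0 subnn bin0 subn1 /= bin1 subn1; ring.
Qed.

Definition seqN (h : int -> nat) (j : nat) : int := (h j%:Z)%:Z.

Section Reduction.
Variables (h : int -> nat) (L : int).
Hypothesis h_neg : forall j : int, j < 0 -> h j = 0%N.
Hypothesis L_le0 : L <= 0.

(* For k < 0 every term of beta_k^d involves h at a negative integer. *)
Lemma beta_neg d k : k < 0 -> beta h L d k = 0.
Proof.
move=> k_lt0; rewrite /beta big1 // => i le_ik.
by rewrite h_neg ?mulr0 //; apply: le_lt_trans k_lt0.
Qed.

(* For 0 <= k <= d the terms with j < 0 vanish and [beta] is [betaN]. *)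
Lemma beta_nat (d k : nat) : (k <= d)%N -> beta h L d%:Z k%:Z = betaN (seqN h) d k.
Proof.
move=> le_kd; set n := absz L; have -> : L = - n%:Z by lia.
rewrite /beta (_ : absz (k%:Z - - n%:Z) = (k + n)%N); last by lia.
rewrite (eq_bigl xpredT); last first.
  by move=> i /=; have := ltn_ord i; move: (nat_of_ord i) => m lt_m; apply/idP; lia.
rewrite -(big_mkord xpredT (fun i : nat => (-1) ^+ absz (k%:Z - (- n%:Z + i%:Z))%R *
     ('C(absz (d%:Z - (- n%:Z + i%:Z))%R, absz (k%:Z - (- n%:Z + i%:Z))%R))%:Z
     * (h (- n%:Z + i%:Z))%:Z)).
rewrite (big_cat_nat (n := n)) /= ?leq0n //; last by lia.
rewrite big_nat_cond big1 ?add0r; last first.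
  by move=> i /andP[/andP[_ lt_in] _]; rewrite h_neg ?mulr0 //; lia.
rewrite -{1}(add0n n) big_addn /betaN (_ : ((k + n).+1 - n = k.+1)%N); last by lia.
apply: eq_big_nat => j /andP[_ lt_jk].
have -> : - n%:Z + (j + n)%N%:Z = j%:Z by lia.
have -> : absz (k%:Z - j%:Z) = (k - j)%N by lia.
by have -> : absz (d%:Z - j%:Z) = (d - j)%N by lia.
Qed.

Lemma hdepth_ok_nat (d : nat) : hdepth_ok h L d%:Z <-> admissibleN (seqN h) d.
Proof.
split=> [ok k le_kd | adm k].
  by rewrite -beta_nat // ok // lez_nat.
case: (ltrP k 0) => [k_lt0 _ | k_ge0]; first by rewrite beta_neg.
case: k k_ge0 => [k|//] _ le_kd; rewrite beta_nat ?adm //; lia.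
Qed.

(* Depth criterion: D is admissible and some beta_(k0)^(D+1) is negative; every
   larger admissible depth would make D + 1 admissible by [admissibleN_le]. *)
Lemma is_hdepth_of_witness (D k0 : nat) :
  admissibleN (seqN h) D -> (k0 <= D.+1)%N -> betaN (seqN h) D.+1 k0 < 0 ->
  is_hdepth h L D%:Z.
Proof.
move=> adm le_k0 neg; split=> [|d' ok']; first exact/hdepth_ok_nat.
case: d' ok' => [d|//] /hdepth_ok_nat adm'; rewrite lez_nat leqNgt.
apply/negP => lt_Dd; have := admissibleN_le lt_Dd adm' le_k0.
by rewrite leNgt neg.
Qed.

End Reduction.

Section Quadratic.
Variables a b : nat.

Local Notation hq := (seqN (hquad a b)).

Lemma seqN_hquad j : hq j = a%:Z * (j ^ 2)%N%:Z + b%:Z * 1.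
Proof. by rewrite /seqN /hquad /= PoszD PoszM mulr1. Qed.

Lemma hquad_beta1 d : betaN hq d 1 = a%:Z + b%:Z - d%:Z * b%:Z.
Proof. by rewrite betaN_1 !seqN_hquad; ring. Qed.

Lemma hquad_beta2 d :
  betaN hq d 2 = 4 * a%:Z + b%:Z - d.-1%:Z * (a%:Z + b%:Z) + 'C(d, 2)%:Z * b%:Z.
Proof. by rewrite betaN_2 !seqN_hquad /=; ring. Qed.

Lemma hquad_betaN d k :
  betaN hq d k = a%:Z * betaN (fun j => (j ^ 2)%N%:Z) d k + b%:Z * betaN (fun=> 1) d k.
Proof. by rewrite -betaN_lin; apply: eq_bigr => j _; rewrite seqN_hquad. Qed.

Ltac eval_reducebig :=
  repeat match goal with |- context [reducebig ?r ?s ?F] =>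
    let v := eval vm_compute in (reducebig r s F) in change (reducebig r s F) with v
  end.

(* For d <= 8 the constraints beta_1^d, beta_2^d >= 0 imply all the others
   (checked on the table of coefficients A(d,k), B(d,k), k <= d <= 8). *)
Lemma hquad_admissible D : (D <= 8)%N ->
  0 <= betaN hq D 1 -> 0 <= betaN hq D 2 -> admissibleN hq D.
Proof.
move=> le_D8 beta1_ge0 beta2_ge0 k le_kD; move: beta1_ge0 beta2_ge0.
rewrite !hquad_betaN /betaN unlock.
case: D le_D8 le_kD => [|[|[|[|[|[|[|[|[|//]]]]]]]]] _;
  case: k => [|[|[|[|[|[|[|[|[|k]]]]]]]]] le_kD; try (exfalso; by move: le_kD).
all: eval_reducebig; lia.
Qed.

Lemma hquad_neg j : j < 0 -> hquad a b j = 0%N.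
Proof. by rewrite /hquad leNgt => ->. Qed.

Lemma hquad_is_hdepth L (D k0 : nat) : L <= 0 -> (D <= 8)%N ->
  0 <= betaN hq D 1 -> 0 <= betaN hq D 2 ->
  (k0 <= D.+1)%N -> betaN hq D.+1 k0 < 0 -> is_hdepth (hquad a b) L D%:Z.
Proof.
move=> L_le0 le_D8 beta1_ge0 beta2_ge0.
exact/(is_hdepth_of_witness hquad_neg L_le0)/hquad_admissible.
Qed.

(* For alpha < 7 the depth is floor(alpha) + 1 = q + 1 with q = a %/ b:
   beta_1^(q+1) = a - q b >= 0 and beta_1^(q+2) = a - (q+1) b < 0. *)
Lemma hquad_hdepth_small L : L <= 0 -> (0 < b)%N -> (a < 7 * b)%N ->
  is_hdepth (hquad a b) L (a %/ b)%N.+1%:Z.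
Proof.
move=> L_le0 b_gt0 lt_a7b.
have q_lt7 : (a %/ b < 7)%N by rewrite div.ltn_divLR.
have q_le : (a %/ b * b <= a)%N := div.leq_trunc_div a b.
have q_gt : (a < (a %/ b).+1 * b)%N := div.ltn_ceil a b_gt0.
move: (a %/ b)%N q_lt7 q_le q_gt => q.
case: q => [|[|[|[|[|[|[|//]]]]]]] _ q_le q_gt;
  apply: (hquad_is_hdepth (k0 := 1)) => //;
  rewrite ?hquad_beta1 ?hquad_beta2 ?bin2 /=; lia.
Qed.

End Quadratic.

Lemma ratio_lt_nat (m n c : nat) : (0 < n)%N ->
  (m%:R / n%:R < c%:R :> rat) = (m < c * n)%N.
Proof. by move=> n_gt0; rewrite ltr_pdivrMr ?ltr0n // -natrM ltr_nat. Qed.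

Lemma ratio_le_nat (m n c : nat) : (0 < n)%N ->
  (m%:R / n%:R <= c%:R :> rat) = (m <= c * n)%N.
Proof. by move=> n_gt0; rewrite ler_pdivrMr ?ltr0n // -natrM ler_nat. Qed.

Lemma ratio_le (m n p q : nat) : (0 < n)%N -> (0 < q)%N ->
  (m%:R / n%:R <= p%:R / q%:R :> rat) = (m * q <= p * n)%N.
Proof.
move=> n_gt0 q_gt0; have n_gt0' : (0 : rat) < n%:R by rewrite ltr0n.
have q_gt0' : (0 : rat) < q%:R by rewrite ltr0n.
by rewrite ler_pdivrMr // mulrAC ler_pdivlMr // -!natrM ler_nat.
Qed.

Lemma floor_ratio (m n : nat) : (0 < n)%N ->
  Num.floor (m%:R / n%:R : rat) = (m %/ n)%:Z.
Proof.
move=> n_gt0; apply: floor_def; rewrite -PoszD -!pmulrn.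
have n_gt0' : (0 : rat) < n%:R by rewrite ltr0n.
rewrite ler_pdivlMr // ltr_pdivrMr // -!natrM ler_nat ltr_nat.
by rewrite div.leq_trunc_div addn1 div.ltn_ceil.
Qed.

Definition hquad_depth (a b : nat) : nat :=
  if (a < 7 * b)%N then (a %/ b).+1
  else if (3 * a <= 22 * b)%N then 8
  else if (a <= 8 * b)%N then 7
  else if (a <= 11 * b)%N then 6
  else 5.

Lemma hquad_depth_select (a b : nat) (alpha : rat) :
  (0 < b)%N -> alpha = a%:R / b%:R ->
  (if alpha < 7 then Num.floor alpha + 1
   else if alpha <= 22%:R / 3%:R then 8
   else if alpha <= 8 then 7
   else if alpha <= 11 then 6
   else 5) = (hquad_depth a b)%:Z.
Proof.
move=> b_gt0 ->; rewrite /hquad_depth floor_ratio //.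
rewrite ratio_lt_nat // ratio_le // !ratio_le_nat // [(a * 3)%N]mulnC.
by do ![case: ifP => _]; lia.
Qed.

Theorem theorem3p10 (a b : nat) (L : int) :
  (0 < a)%N -> (0 < b)%N -> L <= 0 ->
  let alpha : rat := a%:R / b%:R in
  is_hdepth (hquad a b) L
    (if alpha < 7 then Num.floor alpha + 1
     else if alpha <= 22%:R / 3%:R then 8
     else if alpha <= 8 then 7
     else if alpha <= 11 then 6
     else 5).
Proof.
move=> _ b_gt0 L_le0 alpha; rewrite (hquad_depth_select b_gt0 (erefl alpha)) /hquad_depth.
case: ifP => [lt_a7b|ge_a7b]; first exact: hquad_hdepth_small.
case: ifP => [le_3a22b|gt_3a22b].
  by apply: (@hquad_is_hdepth a b L 8 1) => //;
    rewrite ?hquad_beta1 ?hquad_beta2 ?bin2 /=; lia.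
case: ifP => [le_a8b|gt_a8b].
  by apply: (@hquad_is_hdepth a b L 7 2) => //;
    rewrite ?hquad_beta1 ?hquad_beta2 ?bin2 /=; lia.
case: ifP => [le_a11b|gt_a11b].
  by apply: (@hquad_is_hdepth a b L 6 2) => //;
    rewrite ?hquad_beta1 ?hquad_beta2 ?bin2 /=; lia.
by apply: (@hquad_is_hdepth a b L 5 2) => //;
  rewrite ?hquad_beta1 ?hquad_beta2 ?bin2 /=; lia.
Qed.
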